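(* Let $F,K\ge1$ and $0\le Z< F$ be integers. If there exists an $S$-PDA$(F,K,Z)$ with $|S|=\dfrac{K(F-Z)}{Z+1}$, then $K=\ell\binom{F}{Z}$ for some integer $\ell\ge1$.
   Context: A placement delivery array $S$-PDA$(F,K,Z)$ is an $F\times K$ array $R=(r_{j,k})$, $1\le j\le F$, $1\le k\le K$, over a finite set $S$ such that: (1) each cell is either empty or contains an element of $S$; (2) each column contains exactly $Z$ empty cells; (3) each element of $S$ occurs at most once in each row and at most once in each column; (4) if two distinct nonempty cells satisfy $r_{j_1,k_1}=r_{j_2,k_2}=t\in S$, then the cells $r_{j_1,k_2}$ and $r_{j_2,k_1}$ are empty. *)

From mathcomp Require Import all_boot.
Set Implicit Arguments. Unset Strict Implicit. Unset Printing Implicit Defensive.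

(* An F x K array over S: rows 'I_F, columns 'I_K; a cell is None (empty)
   or Some s with s in S. *)
Definition array (F K : nat) (S : finType) := 'I_F -> 'I_K -> option S.

Definition is_PDA (F K Z : nat) (S : finType) (R : array F K S) : Prop :=
  (forall k : 'I_K, #|[set j : 'I_F | R j k == None]| = Z) /\
  (forall (t : S) (j : 'I_F) (k1 k2 : 'I_K),
      R j k1 = Some t -> R j k2 = Some t -> k1 = k2) /\
  (forall (t : S) (j1 j2 : 'I_F) (k : 'I_K),
      R j1 k = Some t -> R j2 k = Some t -> j1 = j2) /\
  (forall (t : S) (j1 j2 : 'I_F) (k1 k2 : 'I_K),
      (j1, k1) <> (j2, k2) ->
      R j1 k1 = Some t -> R j2 k2 = Some t ->
      R j1 k2 = None /\ R j2 k1 = None).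

From mathcomp Require Import all_boot.
Set Implicit Arguments. Unset Strict Implicit. Unset Printing Implicit Defensive.

(* Let [blanks k] be the set of rows in which column [k] is empty and
   [rows_with t] the set of rows containing the symbol [t].  If [t] sits in
   cell (j, k), condition (4) forces [rows_with t :\ j \subset blanks k], so
   [t] occurs in at most Z+1 rows; as the K(F-Z) filled cells are shared by
   only K(F-Z)/(Z+1) symbols, every symbol occurs exactly Z+1 times and
   [blanks k = rows_with t :\ j] holds with equality.  Consequently, for
   i in A and j not in A, moving from a column with blanks A along row j to
   the column carrying the same symbol in row i injects the columns with
   blanks A into those with blanks A - i + j.  Hence all Z-subsets of rows
   are the blank sets of equally many columns, and K is a multiple of
   C(F, Z). *)

Lemma card_sum_nat (T : finType) (A : pred T) : #|A| = \sum_x (x \in A : nat).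
Proof. by rewrite -sum1_card big_mkcond; apply: eq_bigr => x _; case: (x \in A). Qed.

Lemma sum_eq_Some (T : finType) (o : option T) : \sum_t (o == Some t : nat) = (o != None).
Proof.
case: o => [s|] /=; last by rewrite big1.
rewrite (bigD1 s) //= eqxx big1 // => t ts.
by case: eqP => // -[st]; rewrite st eqxx in ts.
Qed.

Lemma setD1_exchange (T : finType) (B : {set T}) (i j : T) :
  j \in B -> j != i -> j |: (B :\ j :\ i) = B :\ i.
Proof.
move=> jB ji; apply/setP => x; rewrite !inE.
by case: (x =P j) => [->|]; rewrite ?ji ?jB.
Qed.

Section ExchangeInvariance.
Variables (T : finType) (f : {set T} -> nat).
Hypothesis f_exchange :
  forall (A : {set T}) (i j : T), i \in A -> j \notin A -> f A <= f (j |: (A :\ i)).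

Lemma f_exchangeE (A : {set T}) (i j : T) :
  i \in A -> j \notin A -> f (j |: (A :\ i)) = f A.
Proof.
move=> iA jA; apply/eqP; rewrite eqn_leq f_exchange // andbT.
have jAi : j \notin A :\ i by rewrite !inE negb_and jA orbT.
have iAij : i \notin j |: (A :\ i).
  by rewrite !inE eqxx /= orbF; apply: contraNneq jA => <-.
by move: (f_exchange (setU11 j (A :\ i)) iAij); rewrite setU1K // setD1K.
Qed.

Lemma exchange_invariant (A B : {set T}) : #|A| = #|B| -> f A = f B.
Proof.
move Hn: #|A :\: B| => n; elim: n A Hn => [|n IHn] A cAB cA.
  have sAB : A \subset B by rewrite -setD_eq0 -cards_eq0 cAB.
  by congr f; apply/eqP; rewrite eqEcard sAB cA /=.
have [i iAB] : exists i, i \in A :\: B by apply/set0Pn; rewrite -card_gt0 cAB.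
have cBA : #|B :\: A| = n.+1 by rewrite cardsD setIC -cA -cardsD.
have [j jBA] : exists j, j \in B :\: A by apply/set0Pn; rewrite -card_gt0 cBA.
move: (iAB) (jBA); rewrite !inE => /andP[iB iA] /andP[jA jB].
rewrite -(f_exchangeE iA jA); apply: IHn.
  have -> : (j |: (A :\ i)) :\: B = (A :\: B) :\ i.
    apply/setP => x; rewrite !inE.
    by case: (x =P j) => [->|_] /=; rewrite ?jB ?andbF // andbCA.
  by move: cAB; rewrite (cardsD1 i) iAB => -[].
by rewrite cardsU1 !inE (negbTE jA) andbF (cardsD1 i A) iA in cA *.
Qed.

End ExchangeInvariance.

Section PDAStructure.
Variables (F K Z : nat) (S : finType) (R : array F K S).

Definition blanks (k : 'I_K) := [set j : 'I_F | R j k == None].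
Definition rows_with (t : S) := [set j : 'I_F | [exists k, R j k == Some t]].
Definition cols_with_blanks (A : {set 'I_F}) := [set k | blanks k == A].

Hypothesis card_blanks : forall k : 'I_K, #|blanks k| = Z.
Hypothesis row_uniq : forall (t : S) (j : 'I_F) (k1 k2 : 'I_K),
  R j k1 = Some t -> R j k2 = Some t -> k1 = k2.
Hypothesis pda_exchange : forall (t : S) (j1 j2 : 'I_F) (k1 k2 : 'I_K),
  (j1, k1) <> (j2, k2) -> R j1 k1 = Some t -> R j2 k2 = Some t ->
  R j1 k2 = None /\ R j2 k1 = None.
Hypothesis card_symbols : #|S| * Z.+1 = K * (F - Z).

Lemma mem_rows_with t j k : R j k = Some t -> j \in rows_with t.
Proof. by move=> Rjk; rewrite inE; apply/existsP; exists k; rewrite Rjk. Qed.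

Lemma rows_withD1_sub t j k : R j k = Some t -> rows_with t :\ j \subset blanks k.
Proof.
move=> Rjk; apply/subsetP => j'; rewrite !inE => /andP[j'j /existsP[k' /eqP Rj'k']].
have neq : (j', k') <> (j, k) by case=> ej'; rewrite ej' eqxx in j'j.
by case: (pda_exchange neq Rj'k' Rjk) => ->.
Qed.

Lemma card_rows_with_le t : #|rows_with t| <= Z.+1.
Proof.
have [->|[j jt]] := set_0Vmem (rows_with t); first by rewrite cards0.
move: (jt); rewrite inE => /existsP[k /eqP Rjk].
by rewrite (cardsD1 j) jt ltnS -(card_blanks k) subset_leq_card ?rows_withD1_sub.
Qed.

Lemma sum_occurrences_in_row t j : \sum_k (R j k == Some t : nat) = (j \in rows_with t).
Proof.
rewrite inE; case: existsP => [[k /eqP Rjk]|noocc].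
  rewrite (bigD1 k) ?Rjk ?eqxx //= big1 // => k' k'k.
  by case: eqP => // /row_uniq/(_ Rjk) ek'; rewrite ek' eqxx in k'k.
by rewrite big1 // => k; case: eqP => // Rjk; case: noocc; exists k; rewrite Rjk.
Qed.

Lemma card_filled k : #|~: blanks k| = F - Z.
Proof.
have := cardsC (blanks k); rewrite card_ord card_blanks.
by move=> /(congr1 (subn^~ Z)); rewrite addKn.
Qed.

Lemma sum_card_rows_with : \sum_t #|rows_with t| = K * (F - Z).
Proof.
rewrite (eq_bigr (fun t => \sum_j \sum_k (R j k == Some t : nat))); last first.
  by move=> t _; rewrite card_sum_nat; apply: eq_bigr => j _; rewrite sum_occurrences_in_row.
rewrite exchange_big; under eq_bigr do rewrite exchange_big; rewrite exchange_big /=.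
rewrite -[K in K * _]card_ord -sum_nat_const; apply: eq_bigr => k _.
rewrite -(card_filled k) card_sum_nat; apply: eq_bigr => j _.
by rewrite sum_eq_Some !inE.
Qed.

Lemma card_rows_with t : #|rows_with t| = Z.+1.
Proof.
have le_rows t' : #|rows_with t'| <= Z.+1 ?= iff (#|rows_with t'| == Z.+1).
  exact/leqif_eq/card_rows_with_le.
have := (leqif_sum (P := predT) (fun t' _ => le_rows t')).2.
rewrite sum_card_rows_with sum_nat_const -card_symbols eqxx.
by move=> /esym/forall_inP/(_ t isT)/eqP.
Qed.

Lemma blanksE t j k : R j k = Some t -> blanks k = rows_with t :\ j.
Proof.
move=> Rjk; apply/eqP; rewrite eq_sym eqEcard rows_withD1_sub //= card_blanks.
by have := cardsD1 j (rows_with t); rewrite (mem_rows_with Rjk) card_rows_with => -[->].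
Qed.

Lemma card_cols_with_blanks_exchange (A : {set 'I_F}) (i j : 'I_F) :
  i \in A -> j \notin A -> #|cols_with_blanks A| <= #|cols_with_blanks (j |: (A :\ i))|.
Proof.
move=> iA jA.
pose partner k := odflt k [pick k' | R i k' == R j k].
have partnerP k : blanks k = A ->
    R i (partner k) = R j k /\ blanks (partner k) = j |: (A :\ i).
  move=> bk; case Rjk: (R j k) => [t|]; last by move: jA; rewrite -bk inE Rjk.
  have bkE := blanksE Rjk.
  have : i \in rows_with t by move: iA; rewrite -bk bkE inE => /andP[].
  rewrite inE => /existsP[k' /eqP Rik'].
  rewrite /partner; case: pickP => [k'' /eqP|/(_ k')]; last by rewrite Rik' Rjk eqxx.
  rewrite Rjk => Rik''; split => //.
  rewrite (blanksE Rik'') -bk bkE setD1_exchange ?(mem_rows_with Rjk) //.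
  by apply: contraNneq jA => ->.
rewrite -(card_in_imset (f := partner)).
  apply/subset_leq_card/subsetP => x /imsetP[k]; rewrite !inE => /eqP/partnerP[_ bk'] ->.
  by rewrite bk'.
move=> k1 k2; rewrite !inE => /eqP bk1 /eqP bk2 e12.
have [Rik1 _] := partnerP _ bk1; have [Rik2 _] := partnerP _ bk2.
case Rjk1: (R j k1) => [t|]; last by move: jA; rewrite -bk1 inE Rjk1.
by apply: (row_uniq Rjk1); rewrite -Rik2 -e12 Rik1.
Qed.

Lemma card_cols_with_blanks_invariant (A B : {set 'I_F}) :
  #|A| = #|B| -> #|cols_with_blanks A| = #|cols_with_blanks B|.
Proof. exact: exchange_invariant card_cols_with_blanks_exchange A B. Qed.

Lemma K_eq_binomial_mul (k0 : 'I_K) : K = 'C(F, Z) * #|cols_with_blanks (blanks k0)|.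
Proof.
transitivity (\sum_(k : 'I_K) 1); first by rewrite sum1_card card_ord.
rewrite -[in 'C(F, Z)](card_ord F) -card_draws -sum_nat_const.
rewrite (partition_big blanks [in [set A : {set 'I_F} | #|A| == Z]]) /=; last first.
  by move=> k _; rewrite inE card_blanks.
apply: eq_bigr => A; rewrite inE => /eqP cA; rewrite sum1dep_card.
by apply: card_cols_with_blanks_invariant; rewrite card_blanks.
Qed.

End PDAStructure.

Theorem mainTheorem6 (F K Z : nat) (S : finType) (R : array F K S) :
  1 <= F -> 1 <= K -> Z < F ->
  is_PDA Z R ->
  #|S| * Z.+1 = K * (F - Z) ->
  exists l : nat, 1 <= l /\ K = l * 'C(F, Z).
Proof.
move=> _ K_gt0 _ [card_blanks [row_uniq [_ pda_exchange]]] card_symbols.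
have [l K_eq] : exists l, K = 'C(F, Z) * l.
  eexists; apply: (K_eq_binomial_mul card_blanks row_uniq pda_exchange card_symbols).
  exact: Ordinal K_gt0.
exists l; split; last by rewrite mulnC.
by move: K_gt0; rewrite K_eq muln_gt0 => /andP[].
Qed.
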